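(* Let $B$ be a Horn program, $E^+,E^-$ finite sets of ground atoms, and $H,H'\in\mathcal{H}_{D,C}$ hypotheses with $H'$ a specialization of $H$. If $size(H') > fp(H,B,E^-) + size(H)$, then $S_{MDL}(H,B,E^+,E^-) > S_{MDL}(H',B,E^+,E^-)$.
   Context: A definite clause is a clause with exactly one positive literal. A hypothesis is a finite set of definite clauses; $\mathcal{H}_{D,C}$ denotes the hypothesis space of hypotheses consistent with a declaration bias $D$ and hypothesis constraints $C$ (only membership matters). $size(H)$ is the total number of literals in $H$. $B$ is background knowledge, $E^+$ positive and $E^-$ negative examples. For a hypothesis $H$: $tp(H,B,E^+)=|\{e\in E^+ : H\cup B\models e\}|$, $tn(H,B,E^-)=|\{e\in E^- : H\cup B\not\models e\}|$, $fp(H,B,E^-)=|E^-|-tn(H,B,E^-)$, and $S_{MDL}(H,B,E^+,E^-)=tp(H,B,E^+)+tn(H,B,E^-)-size(H)$. A clause $C_1$ subsumes a clause $C_2$ iff there is a substitution $\theta$ with $C_1\theta\subseteq C_2$. A clausal theory $T_1$ subsumes $T_2$ ($T_1\preceq T_2$) iff every clause of $T_2$ is subsumed by some clause of $T_1$. $T_1$ is a generalization of $T_2$ iff $T_1\preceq T_2$, and a specialization of $T_2$ iff $T_2\preceq T_1$. *)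

From HB Require Import structures.
From mathcomp Require Import all_boot all_order all_algebra.
From mathcomp Require Import boolp finmap.

Set Implicit Arguments.
Unset Strict Implicit.
Unset Printing Implicit Defensive.

Local Open Scope fset_scope.

(* First-order terms: variables and function symbols indexed by nat
   (constants are 0-ary function symbols). *)
Inductive term : Type :=
| Var of nat
| Fn of nat & seq term.

Fixpoint term_enc (t : term) : GenTree.tree nat :=
  match t with
  | Var n => GenTree.Leaf n
  | Fn f ts => GenTree.Node f (map term_enc ts)
  end.

Fixpoint term_dec (g : GenTree.tree nat) : term :=
  match g with
  | GenTree.Leaf n => Var n
  | GenTree.Node f gs => Fn f (map term_dec gs)
  end.

Lemma term_encK : cancel term_enc term_dec.
Proof.
rewrite /cancel; fix IH 1; case=> [n|f ts] //=; congr Fn.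
elim: ts => //= t ts IHts; by rewrite IH IHts.
Qed.

HB.instance Definition _ := Countable.copy term (can_type term_encK).

(* An atom: a predicate symbol applied to a list of terms. *)
Definition atom := (nat * seq term)%type.

(* A definite clause: its unique positive literal (head) and the finite set
   of atoms occurring negatively (body). Clauses are sets of literals, so the
   body is a finite set. *)
Definition clause := (atom * {fset atom})%type.

Definition program := {fset clause}.

Fixpoint ground_term (t : term) : bool :=
  match t with
  | Var _ => false
  | Fn _ ts => all ground_term ts
  end.

Definition ground_atom (a : atom) : bool := all ground_term a.2.

Definition subst := nat -> term.

Fixpoint subst_term (s : subst) (t : term) : term :=
  match t with
  | Var n => s n
  | Fn f ts => Fn f (map (subst_term s) ts)
  end.

Definition subst_atom (s : subst) (a : atom) : atom := (a.1, map (subst_term s) a.2).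

Definition ground_subst (s : subst) : Prop := forall n, ground_term (s n).

(* Herbrand interpretations: sets of (ground) atoms. *)
Definition interp := atom -> Prop.

Definition clause_true (I : interp) (C : clause) : Prop :=
  forall s : subst, ground_subst s ->
    (forall b, b \in C.2 -> I (subst_atom s b)) -> I (subst_atom s C.1).

Definition is_model (I : interp) (P : program) : Prop :=
  forall C, C \in P -> clause_true I C.

Definition entails (P : program) (e : atom) : Prop :=
  forall I : interp, is_model I P -> I e.

(* size: total number of literals *)
Definition clause_size (C : clause) : nat := (#|` C.2|).+1.
Definition hsize (H : program) : nat := \sum_(C <- H) clause_size C.

Definition tp (H B : program) (Ep : {fset atom}) : nat :=
  #|` [fset e in Ep | `[< entails (H `|` B) e >]] |.
Definition tn (H B : program) (En : {fset atom}) : nat :=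
  #|` [fset e in En | `[< ~ entails (H `|` B) e >]] |.
Definition fp (H B : program) (En : {fset atom}) : nat :=
  #|` En| - tn H B En.

Definition S_MDL (H B : program) (Ep En : {fset atom}) : int :=
  (tp H B Ep + tn H B En)%:Z - (hsize H)%:Z.

Definition clause_subsumes (C1 C2 : clause) : Prop :=
  exists th : subst, subst_atom th C1.1 = C2.1 /\
    (forall b, b \in C1.2 -> subst_atom th b \in C2.2).

Definition theory_subsumes (T1 T2 : program) : Prop :=
  forall C2, C2 \in T2 -> exists2 C1, C1 \in T1 & clause_subsumes C1 C2.

Definition specialization (H' H : program) : Prop := theory_subsumes H H'.

(* Subsumption is sound: if H ⪯ H', every model of H ∪ B is a model of H' ∪ B,
   so H' ∪ B entails fewer atoms than H ∪ B.  Hence tp(H') <= tp(H) and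
   tn(H') <= |E-| = tn(H) + fp(H), and the size gap size(H') - size(H) > fp(H)
   outweighs any gain in true negatives. *)
From HB Require Import structures.
From mathcomp Require Import all_boot all_order all_algebra.
From mathcomp Require Import boolp finmap.
From mathcomp Require Import zify.
Import Order.TTheory GRing.Theory Num.Theory.

Local Open Scope fset_scope.

Definition subst_comp (s th : subst) : subst := fun n => subst_term s (th n).

Lemma subst_term_comp (s th : subst) (t : term) :
  subst_term s (subst_term th t) = subst_term (subst_comp s th) t.
Proof.
move: t; fix IH 1; case=> [n|f ts] //=; congr Fn.
by elim: ts => //= t ts IHts; rewrite IH IHts.
Qed.

Lemma subst_atom_comp (s th : subst) (a : atom) :
  subst_atom s (subst_atom th a) = subst_atom (subst_comp s th) a.
Proof.
rewrite /subst_atom /= -map_comp; congr pair; apply: eq_map => t /=.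
exact: subst_term_comp.
Qed.

Lemma ground_subst_term (s : subst) (t : term) :
  ground_subst s -> ground_term (subst_term s t).
Proof.
move=> gs; move: t; fix IH 1; case=> [n|f ts] //=.
by elim: ts => //= t ts IHts; rewrite IH IHts.
Qed.

Lemma ground_subst_comp (s th : subst) :
  ground_subst s -> ground_subst (subst_comp s th).
Proof. by move=> gs n; apply: ground_subst_term. Qed.

Lemma clause_subsumes_true (I : interp) (C1 C2 : clause) :
  clause_subsumes C1 C2 -> clause_true I C1 -> clause_true I C2.
Proof.
move=> [th [head_th body_th]] C1_true s gs body_true.
rewrite -head_th subst_atom_comp; apply: C1_true; first exact: ground_subst_comp.
by move=> b bC1; rewrite -subst_atom_comp; apply/body_true/body_th.
Qed.

Lemma theory_subsumes_model (I : interp) (T1 T2 : program) :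
  theory_subsumes T1 T2 -> is_model I T1 -> is_model I T2.
Proof.
move=> T12 I_T1 C2 /T12 [C1 C1T1 C12].
exact: clause_subsumes_true C12 (I_T1 C1 C1T1).
Qed.

Lemma is_modelU (I : interp) (T1 T2 : program) :
  is_model I (T1 `|` T2) <-> is_model I T1 /\ is_model I T2.
Proof.
split=> [I_T12 | [I_T1 I_T2] C]; last by rewrite in_fsetU => /orP[/I_T1|/I_T2].
by split=> C CT; apply: I_T12; rewrite in_fsetU CT ?orbT.
Qed.

Lemma specialization_entails (H H' B : program) (e : atom) :
  specialization H' H -> entails (H' `|` B) e -> entails (H `|` B) e.
Proof.
move=> H_H' H'B_e I /is_modelU [I_H I_B]; apply: H'B_e; apply/is_modelU.
by split=> //; apply: theory_subsumes_model H_H' I_H.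
Qed.

Lemma tp_specialization (H H' B : program) (Ep : {fset atom}) :
  specialization H' H -> (tp H' B Ep <= tp H B Ep)%N.
Proof.
move=> H_H'; apply/fsubset_leq_card/fsubsetP => e.
rewrite !inE => /andP[-> /asboolP H'B_e]; apply/asboolP.
exact: specialization_entails H_H' H'B_e.
Qed.

Lemma tn_le_card (H B : program) (En : {fset atom}) : (tn H B En <= #|` En|)%N.
Proof. by apply/fsubset_leq_card/fsubsetP => e; rewrite !inE => /andP[]. Qed.

Theorem proposition4p13
  (HS : program -> Prop) (* the hypothesis space H_{D,C}, only membership matters *)
  (B : program) (Ep En : {fset atom})
  (HEp : forall e, e \in Ep -> ground_atom e)
  (HEn : forall e, e \in En -> ground_atom e)
  (H H' : program) (HH : HS H) (HH' : HS H')
  (Hspec : specialization H' H)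
  (Hsize : (hsize H' > fp H B En + hsize H)%N) :
  (S_MDL H' B Ep En < S_MDL H B Ep En)%R.
Proof.
have tp_le := @tp_specialization H H' B Ep Hspec.
have tn'_le := tn_le_card H' B En.
have tn_le := tn_le_card H B En.
move: Hsize; rewrite /S_MDL /fp.
lia.
Qed.
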